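(* Let $P$ be a $3$-nice twisted $n$-gon with corner invariants $(x_0,\dots,x_{2n-1})$ (indices taken modulo $2n$), and let $P'$ be the twisted $n$-gon defined by $P'_i=P_{i-2}P_{i+1}\cap P_{i-1}P_{i+2}$, with corner invariants $(x'_0,\dots,x'_{2n-1})$. Then, whenever all quantities involved are finite and the denominators are nonzero, for every $i$: $$x'_{2i}=x_{2i-2}\cdot\frac{x_{2i-4}+x_{2i-1}-1}{x_{2i-2}x_{2i-1}-(1-x_{2i+1})(1-x_{2i-4})},\qquad x'_{2i+1}=x_{2i+3}\cdot\frac{x_{2i+2}+x_{2i+5}-1}{x_{2i+2}x_{2i+3}-(1-x_{2i+5})(1-x_{2i})}.$$
   Context: A twisted $n$-gon is a map $P:\mathbb{Z}\to\mathbb{RP}^2$ with every three consecutive points non-collinear and $P_{i+n}=M(P_i)$ for a fixed $M\in\mathrm{PGL}_3(\mathbb{R})$. $P$ is $3$-nice if $P_i,P_{i+1},P_{i+3},P_{i+4}$ are in general position for every $i$. $XY$ denotes the line through $X$ and $Y$. (The map $P\mapsto P'$ is the deep diagonal map $T_3$ with an index shift.) Inverse cross ratio: for four collinear points $A,B,C,D$, map their line projectively to the $x$-axis with coordinates $a,b,c,d$ and set $\chi(A,B,C,D)=\frac{(a-b)(c-d)}{(a-c)(b-d)}$ (value in $\mathbb{R}\cup\{\infty\}$, projectively invariant). Corner invariants: $x_{2i}=\chi(P_{i-2},P_{i-1},P_{i-2}P_{i-1}\cap P_iP_{i+1},P_{i-2}P_{i-1}\cap P_{i+1}P_{i+2})$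 and $x_{2i+1}=\chi(P_{i+2},P_{i+1},P_{i+2}P_{i+1}\cap P_iP_{i-1},P_{i+2}P_{i+1}\cap P_{i-1}P_{i-2})$, with $x_{j+2n}=x_j$. *)

From HB Require Import structures.
From mathcomp Require Import all_boot all_order all_algebra.
From mathcomp Require Import reals.
Set Implicit Arguments. Unset Strict Implicit. Unset Printing Implicit Defensive.
Import Order.TTheory GRing.Theory Num.Theory.
Local Open Scope ring_scope.

(* Points of RP^2 are represented by nonzero homogeneous coordinate row
   vectors in R^3; a projective transformation M in PGL_3 acts by v |-> v *m M. *)

Section Proj.
Variable R : realType.

Definition vec3 (a b c : R) : 'rV[R]_3 :=
  \row_(j < 3) (if val j == 0%N then a else if val j == 1%N then b else c).

Definition proj_eq (u v : 'rV[R]_3) : Prop := exists k : R, k != 0 /\ u = k *: v.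

Definition det3 (u v w : 'rV[R]_3) : R :=
  \det (\matrix_(i < 3) (if val i == 0%N then u else if val i == 1%N then v else w)).

(* Q (a point, nonzero) is the intersection point XY \cap ZW of the lines XY
   and ZW, where X <> Y, Z <> W (as points of RP^2) and the two lines differ. *)
Definition meet (X Y Z W Q : 'rV[R]_3) : Prop :=
  [/\ (X != 0 /\ Y != 0 /\ ~ proj_eq X Y),
      (Z != 0 /\ W != 0 /\ ~ proj_eq Z W),
      ~ (det3 X Y Z = 0 /\ det3 X Y W = 0),
      Q != 0 & (det3 X Y Q = 0 /\ det3 Z W Q = 0)].

(* r is the (finite) inverse cross ratio chi(A,B,C,D): some projective
   transformation M maps the line of A,B,C,D to the x-axis, with A,B,C,D
   going to the points with coordinates a,b,c,d, and
   r = (a-b)(c-d)/((a-c)(b-d)), the denominator being nonzero. *)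
Definition is_chi (A B C D : 'rV[R]_3) (r : R) : Prop :=
  exists M : 'M[R]_3, M \in unitmx /\
  exists a b c d : R,
    [/\ proj_eq (A *m M) (vec3 a 0 1), proj_eq (B *m M) (vec3 b 0 1),
        (proj_eq (C *m M) (vec3 c 0 1) /\ proj_eq (D *m M) (vec3 d 0 1)),
        (a - c) * (b - d) != 0 &
        r = (a - b) * (c - d) / ((a - c) * (b - d))].

Definition twisted_ngon (n : nat) (P : int -> 'rV[R]_3) : Prop :=
  (forall i : int, det3 (P i) (P (i + 1)) (P (i + 2)) != 0) /\
  exists M : 'M[R]_3, M \in unitmx /\
    forall i : int, proj_eq (P (i + n%:Z)) (P i *m M).

Definition gen_pos4 (A B C D : 'rV[R]_3) : Prop :=
  [/\ det3 A B C != 0, det3 A B D != 0, det3 A C D != 0 & det3 B C D != 0].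

Definition nice3 (P : int -> 'rV[R]_3) : Prop :=
  forall i : int, gen_pos4 (P i) (P (i + 1)) (P (i + 3)) (P (i + 4)).

Definition corner_even (P : int -> 'rV[R]_3) (i : int) (r : R) : Prop :=
  exists Q1 Q2 : 'rV[R]_3,
    [/\ meet (P (i - 2)) (P (i - 1)) (P i) (P (i + 1)) Q1,
        meet (P (i - 2)) (P (i - 1)) (P (i + 1)) (P (i + 2)) Q2 &
        is_chi (P (i - 2)) (P (i - 1)) Q1 Q2 r].

Definition corner_odd (P : int -> 'rV[R]_3) (i : int) (r : R) : Prop :=
  exists Q1 Q2 : 'rV[R]_3,
    [/\ meet (P (i + 2)) (P (i + 1)) (P i) (P (i - 1)) Q1,
        meet (P (i + 2)) (P (i + 1)) (P (i - 1)) (P (i - 2)) Q2 &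
        is_chi (P (i + 2)) (P (i + 1)) Q1 Q2 r].

Definition corner_invariants (P : int -> 'rV[R]_3) (x : int -> R) : Prop :=
  forall i : int, corner_even P i (x (2 * i)) /\ corner_odd P i (x (2 * i + 1)).

End Proj.

From HB Require Import structures.
From mathcomp Require Import all_boot all_order all_algebra.
From mathcomp Require Import reals.
From mathcomp Require Import ring.
Import Order.TTheory GRing.Theory Num.Theory.
Local Open Scope ring_scope.

(* Each corner invariant of P is the cross ratio of the four lines joining a vertex to
   its neighbours, hence a ratio of products of 3x3 determinants of vertices.  The four
   points defining x'_{2i} lie on the line P_{i-3}P_i, where they are cut out by the
   lines P_{i-4}P_{i-1}, P_{i-2}P_{i+1}, P_{i-1}P_{i+2} and by P_i itself, so x'_{2i} is
   also a ratio of determinants.  In the projective frame P_{i-3}, P_{i-1}, P_i the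
   claimed formula becomes a polynomial identity.  The odd formula is the even one for
   the reversed polygon. *)

Section DeepDiagonalMap.
Variable R : realType.
Implicit Types (A B C D U V X Y Z W Q : 'rV[R]_3) (M : 'M[R]_3).
Implicit Types (P : int -> 'rV[R]_3) (x : int -> R).

Set Implicit Arguments.
Unset Strict Implicit.
Unset Printing Implicit Defensive.

Lemma det_mx33 (M : 'M[R]_3) : \det M =
  M 0 0 * (M 1 1 * M 2 2 - M 1 2 * M 2 1) - M 0 1 * (M 1 0 * M 2 2 - M 1 2 * M 2 0)
  + M 0 2 * (M 1 0 * M 2 1 - M 1 1 * M 2 0).
Proof.
have -> : M = \matrix_(i, j) M (inord i) (inord j).
  by apply/matrixP => i j; rewrite mxE !inord_val.
rewrite (expand_det_row _ 0) !big_ord_recl big_ord0 /cofactor.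
rewrite !(expand_det_row _ 0) !big_ord_recl !big_ord0 /cofactor !det_mx11 !mxE /= /bump /=.
have -> : inord 0 = 0 :> 'I_3 by apply/val_inj; rewrite /= inordK.
have -> : inord 1 = 1 :> 'I_3 by apply/val_inj; rewrite /= inordK.
have -> : inord 2 = 2 :> 'I_3 by apply/val_inj; rewrite /= inordK.
rewrite !expr0 ?expr1 ?expr2; ring.
Qed.

Lemma det3E A B C : det3 A B C =
  A 0 0 * (B 0 1 * C 0 2 - B 0 2 * C 0 1) - A 0 1 * (B 0 0 * C 0 2 - B 0 2 * C 0 0)
  + A 0 2 * (B 0 0 * C 0 1 - B 0 1 * C 0 0).
Proof. by rewrite /det3 det_mx33 !mxE. Qed.

Lemma row3P A B : A 0 0 = B 0 0 -> A 0 1 = B 0 1 -> A 0 2 = B 0 2 -> A = B.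
Proof.
move=> e0 e1 e2; apply/rowP => -[[|[|[|//]]] lt_j3].
- by rewrite (_ : Ordinal _ = 0) //; apply/val_inj.
- by rewrite (_ : Ordinal _ = 1) //; apply/val_inj.
- by rewrite (_ : Ordinal _ = 2) //; apply/val_inj.
Qed.

Definition rows3 A B C : 'M[R]_3 :=
  \matrix_(i < 3) (if val i == 0%N then A else if val i == 1%N then B else C).

Lemma det3_rows3 A B C : det3 A B C = \det (rows3 A B C).
Proof. by []. Qed.

Lemma mulmx_rows3 (v : 'rV[R]_3) A B C :
  v *m rows3 A B C = v 0 0 *: A + v 0 1 *: B + v 0 2 *: C.
Proof.
rewrite mulmx_sum_row !big_ord_recl big_ord0 addr0 addrA.
have -> : lift ord0 ord0 = 1 :> 'I_3 by apply/val_inj.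
have -> : lift ord0 (lift ord0 ord0) = 2 :> 'I_3 by apply/val_inj.
by rewrite !rowK.
Qed.

Lemma det3_mulmx A B C M : det3 (A *m M) (B *m M) (C *m M) = det3 A B C * \det M.
Proof.
rewrite !det3_rows3 -det_mulmx; congr (\det _); apply/row_matrixP => i.
by rewrite row_mul !rowK; case: ifP => // _; case: ifP.
Qed.

Lemma det3_cycle A B C : det3 A B C = det3 B C A.
Proof. by rewrite !det3E; ring. Qed.

Lemma det3_swap A B C : det3 A B C = - det3 A C B.
Proof. by rewrite !det3E; ring. Qed.

Lemma det3_rev A B C : det3 A B C = - det3 C B A.
Proof. by rewrite !det3E; ring. Qed.

Lemma det3_dup23 A B : det3 A B B = 0.
Proof. by rewrite det3E; ring. Qed.

Lemma det3_dup13 A B : det3 A B A = 0.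
Proof. by rewrite det3E; ring. Qed.

Lemma det3_linr A B X Y (s t : R) :
  det3 A B (s *: X + t *: Y) = s * det3 A B X + t * det3 A B Y.
Proof. by rewrite !det3E !mxE; ring. Qed.

Lemma det3_span2 U V W (a b c d : R) :
  det3 (a *: U + b *: V) (c *: U + d *: V) W = (a * d - b * c) * det3 U V W.
Proof. by rewrite !det3E !mxE; ring. Qed.

Lemma det3_pluecker X A B C D :
  det3 X A B * det3 X C D = det3 X A C * det3 X B D - det3 X A D * det3 X B C.
Proof. by rewrite !det3E; ring. Qed.

Lemma det3_neq0_cycle A B C : det3 A B C != 0 -> det3 B C A != 0.
Proof. by rewrite det3_cycle. Qed.

Lemma det3_neq0_swap A B C : det3 A B C != 0 -> det3 A C B != 0.
Proof. by rewrite det3_swap oppr_eq0. Qed.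

Definition distinct_pts X Y := X != 0 /\ Y != 0 /\ ~ proj_eq X Y.

Lemma proj_eq_sym X Y : proj_eq X Y -> proj_eq Y X.
Proof.
case=> k [k0 ->]; exists k^-1; split; first by rewrite invr_eq0.
by rewrite scalerA mulVf // scale1r.
Qed.

Lemma distinct_pts_sym X Y : distinct_pts X Y -> distinct_pts Y X.
Proof. by case=> X0 [Y0 nXY]; split=> //; split=> // /proj_eq_sym. Qed.

Lemma distinct_pts_comb0 X Y (a b : R) :
  distinct_pts X Y -> a *: X + b *: Y = 0 -> a = 0 /\ b = 0.
Proof.
case=> X0 [Y0 nXY] eXY.
have [a0 | a0] := eqVneq a 0.
  move: eXY; rewrite a0 scale0r add0r => /eqP; rewrite scaler_eq0 (negPf Y0) orbF.
  by move/eqP.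
have [b0 | b0] := eqVneq b 0.
  by move: eXY; rewrite b0 scale0r addr0 => /eqP; rewrite scaler_eq0 (negPf X0) (negPf a0).
exfalso; apply: nXY; exists (- b / a); split; first by rewrite mulf_neq0 ?oppr_eq0 ?invr_eq0.
apply: (scalerI a0); rewrite scalerA mulrCA mulfV // mulr1 scaleNr.
by apply/eqP; rewrite -addr_eq0 eXY.
Qed.

Lemma det3_eq0_span X Y Q :
  distinct_pts X Y -> det3 X Y Q = 0 -> exists s t, Q = s *: X + t *: Y.
Proof.
move=> dXY /eqP; rewrite det3_rows3 => /det0P [v v0]; rewrite mulmx_rows3 => ev.
have [c0 | c0] := eqVneq (v 0 2) 0.
  move: ev; rewrite c0 scale0r addr0 => /(distinct_pts_comb0 dXY) [a0 b0].
  by case/eqP: v0; apply: row3P; rewrite ?a0 ?b0 ?c0 mxE.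
have -> : Q = (v 0 2)^-1 *: (v 0 2 *: Q) by rewrite scalerA mulVf // scale1r.
have -> : v 0 2 *: Q = - (v 0 0 *: X + v 0 1 *: Y).
  by apply/eqP; rewrite -addr_eq0 addrC ev.
exists (- v 0 0 / v 0 2), (- v 0 1 / v 0 2).
by apply: row3P; rewrite !mxE; field.
Qed.

Lemma distinct_span2_det U V (a b c d : R) :
  distinct_pts (a *: U + b *: V) (c *: U + d *: V) -> a * d - b * c != 0.
Proof.
move=> dZW; apply/eqP => e.
have eU : d *: (a *: U + b *: V) + (- b) *: (c *: U + d *: V) = (a * d - b * c) *: U.
  by apply: row3P; rewrite !mxE; ring.
have eV : (- c) *: (a *: U + b *: V) + a *: (c *: U + d *: V) = (a * d - b * c) *: V.
  by apply: row3P; rewrite !mxE; ring.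
rewrite e scale0r in eU; rewrite e scale0r in eV.
have [d0 /eqP] := distinct_pts_comb0 dZW eU; rewrite oppr_eq0 => /eqP b0.
have [/eqP] := distinct_pts_comb0 dZW eV; rewrite oppr_eq0 => /eqP c0 a0.
by case: dZW; rewrite a0 b0 !scale0r addr0 eqxx.
Qed.

Lemma meet_line1 X Y Z W Q : meet X Y Z W Q ->
  exists s t, Q = s *: X + t *: Y /\ s * det3 Z W X + t * det3 Z W Y = 0.
Proof.
case=> dXY _ _ _ [hXYQ hZWQ].
have [s [t eQ]] := det3_eq0_span dXY hXYQ.
by exists s, t; rewrite -det3_linr -eQ.
Qed.

Lemma meet_line2 X Y Z W Q : meet X Y Z W Q ->
  exists s t, Q = s *: Z + t *: W /\ s * det3 X Y Z + t * det3 X Y W = 0.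
Proof.
case=> _ dZW _ _ [hXYQ hZWQ].
have [s [t eQ]] := det3_eq0_span dZW hZWQ.
by exists s, t; rewrite -det3_linr -eQ.
Qed.

Lemma meet_sym X Y Z W Q : meet X Y Z W Q -> meet W Z Y X Q.
Proof.
case=> dXY dZW nXYZW Q0 [hXY hZW].
split=> //; try exact: distinct_pts_sym.
- case=> hY hX; apply: nXYZW.
  have [a [b ->]] := det3_eq0_span (distinct_pts_sym dZW) hY.
  have [c [d ->]] := det3_eq0_span (distinct_pts_sym dZW) hX.
  by rewrite !det3_span2 det3_dup23 det3_dup13 !mulr0.
- by split; rewrite det3_cycle det3_swap ?hXY ?hZW oppr0.
Qed.

Lemma meet_on_line A B Z W X Y Q (z1 z2 w1 w2 : R) :
  meet A B Z W Q -> Z = z1 *: X + z2 *: Y -> W = w1 *: X + w2 *: Y -> det3 X Y Q = 0.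
Proof.
case=> _ dZW _ _ [_ hQ] eZ eW; rewrite eZ eW in dZW hQ.
by move/eqP: hQ; rewrite det3_span2 mulf_eq0 (negPf (distinct_span2_det dZW)) => /eqP.
Qed.

Lemma proj_eq_x_axis X U V M (x1 x2 a : R) :
  proj_eq (X *m M) (vec3 a 0 1) -> X = x1 *: U + x2 *: V ->
  exists2 k, k != 0 & k * a = x1 * (U *m M) 0 0 + x2 * (V *m M) 0 0
                   /\ k = x1 * (U *m M) 0 2 + x2 * (V *m M) 0 2.
Proof.
case=> k [k0 e] eX; exists k => //; rewrite eX mulmxDl -!scalemxAl in e.
split.
- by have := congr1 (fun m : 'rV[R]_3 => m 0 0) e; rewrite !mxE /= => <-.
- by have := congr1 (fun m : 'rV[R]_3 => m 0 2) e; rewrite !mxE /= mulr1 => <-.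
Qed.

Lemma bracket_affine (u0 u2 v0 v2 k l x y x1 x2 y1 y2 : R) :
  k * x = x1 * u0 + x2 * v0 -> k = x1 * u2 + x2 * v2 ->
  l * y = y1 * u0 + y2 * v0 -> l = y1 * u2 + y2 * v2 ->
  k * l * (x - y) = (x1 * y2 - x2 * y1) * (u0 * v2 - u2 * v0).
Proof.
move=> ex ek ey el.
have -> : k * l * (x - y) = k * x * l - k * (l * y) by ring.
by rewrite ex ey ek el; ring.
Qed.

Lemma is_chi_span A B C D U V (a1 a2 b1 b2 c1 c2 d1 d2 r : R) :
  is_chi A B C D r ->
  A = a1 *: U + a2 *: V -> B = b1 *: U + b2 *: V ->
  C = c1 *: U + c2 *: V -> D = d1 *: U + d2 *: V ->
  [/\ r = (a1 * b2 - a2 * b1) * (c1 * d2 - c2 * d1)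
          / ((a1 * c2 - a2 * c1) * (b1 * d2 - b2 * d1)),
      a1 * c2 - a2 * c1 != 0 & b1 * d2 - b2 * d1 != 0].
Proof.
case=> M [_ [a [b [c [d [pA pB [pC pD] hden ->]]]]]] eA eB eC eD.
have [kA kA0 [eA0 eA2]] := proj_eq_x_axis pA eA.
have [kB kB0 [eB0 eB2]] := proj_eq_x_axis pB eB.
have [kC kC0 [eC0 eC2]] := proj_eq_x_axis pC eC.
have [kD kD0 [eD0 eD2]] := proj_eq_x_axis pD eD.
have eAB := bracket_affine eA0 eA2 eB0 eB2; have eCD := bracket_affine eC0 eC2 eD0 eD2.
have eAC := bracket_affine eA0 eA2 eC0 eC2; have eBD := bracket_affine eB0 eB2 eD0 eD2.
move: hden; rewrite mulf_eq0 negb_or => /andP [hac hbd].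
have : kA * kC * (a - c) != 0 by rewrite !mulf_neq0.
rewrite eAC mulf_eq0 negb_or => /andP [nAC nM].
have : kB * kD * (b - d) != 0 by rewrite !mulf_neq0.
rewrite eBD mulf_eq0 negb_or => /andP [nBD _].
split=> //.
rewrite (_ : (a - b) * (c - d) / ((a - c) * (b - d)) =
  (kA * kB * (a - b)) * (kC * kD * (c - d)) / ((kA * kC * (a - c)) * (kB * kD * (b - d)))).
  by rewrite eAB eCD eAC eBD; field; rewrite nAC nBD nM.
by field; rewrite kA0 kB0 kC0 kD0 hac hbd.
Qed.

Lemma solve_lin (s t a b : R) : a != 0 -> s * a + t * b = 0 -> s = - t * b / a.
Proof.
by move=> a0 /eqP; rewrite addr_eq0 => /eqP e; apply: (mulIf a0); rewrite e; field.
Qed.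

Lemma scale_span2 U V (s t a b c d : R) :
  s *: (a *: U + b *: V) + t *: (c *: U + d *: V) = (s * a + t * c) *: U + (s * b + t * d) *: V.
Proof. by apply: row3P; rewrite !mxE; ring. Qed.

(* Both [corner_even P i] and [corner_odd P i] unfold to [corner_inv] of five
   consecutive vertices. *)
Definition corner_inv A B C X D (r : R) := exists Q1 Q2,
  [/\ meet A B C X Q1, meet A B X D Q2 & is_chi A B Q1 Q2 r].

Definition pencil_num X A B C D : R := det3 X A B * det3 X C D.
Definition pencil_den X A B C D : R := det3 X A C * det3 X B D.
Definition pencil_chi X A B C D : R := pencil_num X A B C D / pencil_den X A B C D.

Lemma corner_inv_pencil A B C X D r : corner_inv A B C X D r ->
  det3 X A C != 0 -> det3 X B D != 0 -> r = pencil_chi X A B C D.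
Proof.
case=> Q1 [Q2 [m1 m2 chi]] hAC hBD.
have [s1 [t1 [eQ1 c1]]] := meet_line1 m1.
have [s2 [t2 [eQ2 c2]]] := meet_line1 m2.
have eA : A = 1 *: A + 0 *: B by rewrite scale1r scale0r addr0.
have eB : B = 0 *: A + 1 *: B by rewrite scale1r scale0r add0r.
have [-> nt1 ns2] := is_chi_span chi eA eB eQ1 eQ2.
rewrite mul1r mul0r subr0 in nt1; rewrite mul0r mul1r sub0r oppr_eq0 in ns2.
rewrite !(det3_cycle C X) in c1; rewrite (det3_swap X D A) (det3_swap X D B) addrC in c2.
rewrite (solve_lin hAC c1) (solve_lin _ c2) ?oppr_eq0 //.
rewrite /pencil_chi /pencil_num /pencil_den det3_pluecker.
by field; rewrite nt1 ns2 hAC hBD.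
Qed.

Lemma cross_ratio_cut (sa ta sb tb sc tc td al1 be1 al2 be2 al3 be3 : R) :
  be1 != 0 -> be2 != 0 -> be3 != 0 ->
  sa * al1 + ta * be1 = 0 -> sb * al2 + tb * be2 = 0 -> sc * al3 + tc * be3 = 0 ->
  sa * tc - ta * sc != 0 -> sb * td != 0 ->
  (sa * tb - ta * sb) * (sc * td) / ((sa * tc - ta * sc) * (sb * td)) =
    (al1 * be2 - be1 * al2) * be3 / ((al1 * be3 - be1 * al3) * be2)
  /\ (al1 * be3 - be1 * al3) * be2 != 0.
Proof.
move=> b1 b2 b3 e1 e2 e3 nAC nBD.
have eta : ta = - sa * al1 / be1 by apply: solve_lin; rewrite // addrC.
have etb : tb = - sb * al2 / be2 by apply: solve_lin; rewrite // addrC.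
have etc : tc = - sc * al3 / be3 by apply: solve_lin; rewrite // addrC.
have eAC : sa * tc - ta * sc = sa * sc * (al1 * be3 - be1 * al3) / (be1 * be3).
  by rewrite eta etc; field; rewrite b1 b3.
have sa0 : sa != 0 by apply: contraNneq nAC; rewrite eAC => ->; rewrite !mul0r.
have sc0 : sc != 0 by apply: contraNneq nAC; rewrite eAC => ->; rewrite mulr0 !mul0r.
have N0 : al1 * be3 - be1 * al3 != 0.
  by apply: contraNneq nAC; rewrite eAC => ->; rewrite mulr0 mul0r.
move: nBD; rewrite mulf_eq0 negb_or => /andP [sb0 td0].
split; last exact: mulf_neq0.
rewrite eAC etb eta; field.
by rewrite b1 b2 b3 sa0 sb0 sc0 td0 N0.
Qed.

(* The cross ratio, on the line UV, of its intersections with the lines A1A2, B1B2,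
   C1C2 and of the point V. *)
Definition line_chi_num U V A1 A2 B1 B2 C1 C2 : R :=
  (det3 A1 A2 U * det3 B1 B2 V - det3 A1 A2 V * det3 B1 B2 U) * det3 C1 C2 V.
Definition line_chi_den U V A1 A2 B1 B2 C1 C2 : R :=
  (det3 A1 A2 U * det3 C1 C2 V - det3 A1 A2 V * det3 C1 C2 U) * det3 B1 B2 V.
Definition line_chi U V A1 A2 B1 B2 C1 C2 : R :=
  line_chi_num U V A1 A2 B1 B2 C1 C2 / line_chi_den U V A1 A2 B1 B2 C1 C2.

Lemma corner_inv_line U V Y A1 A2 B1 B2 C1 C2 A B Z X W (z1 z2 x1 x2 x3 x4 w1 w2 r : R) :
  meet A1 A2 U V A -> meet U V B1 B2 B ->
  Z = z1 *: C1 + z2 *: C2 -> X = x1 *: C1 + x2 *: C2 ->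
  X = x3 *: V + x4 *: Y -> W = w1 *: V + w2 *: Y ->
  det3 A1 A2 V != 0 -> det3 B1 B2 V != 0 -> det3 C1 C2 V != 0 ->
  corner_inv A B Z X W r ->
  r = line_chi U V A1 A2 B1 B2 C1 C2 /\ line_chi_den U V A1 A2 B1 B2 C1 C2 != 0.
Proof.
move=> mA mB eZ eX eX' eW b1 b2 b3 [Q1 [Q2 [m1 m2 chi]]].
have [sa [ta [eA cA]]] := meet_line2 mA.
have [sb [tb [eB cB]]] := meet_line1 mB.
have [s1 [t1 [eQ1 _]]] := meet_line1 m1.
have [s2 [t2 [eQ2 _]]] := meet_line1 m2.
have {eQ1} [sc [tc eQ1]] : exists sc tc, Q1 = sc *: U + tc *: V.
  by rewrite eQ1 eA eB scale_span2; do 2 eexists.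
have {eQ2} [sd [td eQ2]] : exists sd td, Q2 = sd *: U + td *: V.
  by rewrite eQ2 eA eB scale_span2; do 2 eexists.
have cC : sc * det3 C1 C2 U + tc * det3 C1 C2 V = 0.
  by rewrite -det3_linr -eQ1 (meet_on_line m1 eZ eX).
(* Q2 lies on UV and on VY, and these lines differ since AB and XW do. *)
have sd0 : sd = 0.
  have := meet_on_line m2 eX' eW; rewrite eQ2 det3_linr det3_dup13 mulr0 addr0.
  move/eqP; rewrite mulf_eq0 => /orP [/eqP // | /eqP VYU].
  case: m2 => _ _ nABXW _ _; case: nABXW.
  rewrite eA eB eX' eW !det3_span2 !det3_linr det3_dup23 det3_cycle VYU.
  by rewrite !(mulr0, addr0).
rewrite sd0 in eQ2.
have [-> nAC nBD] := is_chi_span chi eA eB eQ1 eQ2.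
rewrite !mulr0 !subr0 in nBD *.
exact: cross_ratio_cut.
Qed.

Lemma T3_fractions (Np Dp Na Da Nb Db Nc Dc Nd Dd : R) :
  Dp != 0 -> Da != 0 -> Db != 0 -> Dc != 0 -> Dd != 0 ->
  Np * (Na * Nc * Dd * Db - (Dd - Nd) * (Db - Nb) * Da * Dc)
    = Dp * Na * (Nb * Dc + Nc * Db - Db * Dc) * Dd ->
  let xa := Na / Da in let xb := Nb / Db in let xc := Nc / Dc in let xd := Nd / Dd in
  xa * xc - (1 - xd) * (1 - xb) != 0 ->
  Np / Dp = xa * ((xb + xc - 1) / (xa * xc - (1 - xd) * (1 - xb))).
Proof.
move=> Dp0 Da0 Db0 Dc0 Dd0 key xa xb xc xd.
set K := Na * Nc * Dd * Db - _ in key.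
have -> : xa * xc - (1 - xd) * (1 - xb) = K / (Da * Dc * Dd * Db).
  by rewrite /K /xa /xb /xc /xd; field; rewrite Da0 Db0 Dc0 Dd0.
move=> hK; have K0 : K != 0 by apply: contraNneq hK => ->; rewrite mul0r.
have -> : Np = Dp * Na * (Nb * Dc + Nc * Db - Db * Dc) * Dd / K by rewrite -key; field.
by rewrite /xa /xb /xc; field; rewrite Dp0 Da0 Db0 Dc0 Dd0 K0.
Qed.

Lemma T3_key (a b c d e f g : 'rV[R]_3) : det3 b d e != 0 ->
  let Na := pencil_num e b c d f in let Da := pencil_den e b c d f in
  let Nb := pencil_num d a b c e in let Db := pencil_den d a b c e in
  let Nc := pencil_num c f e d b in let Dc := pencil_den c f e d b in
  let Nd := pencil_num d g f e c in let Dd := pencil_den d g f e c in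
  line_chi_num b e a d c f d g * (Na * Nc * Dd * Db - (Dd - Nd) * (Db - Nb) * Da * Dc)
  = line_chi_den b e a d c f d g * Na * (Nb * Dc + Nc * Db - Db * Dc) * Dd.
Proof.
(* In the frame b, d, e every determinant picks up the factor \det M, and the identity
   becomes polynomial in the remaining coordinates. *)
move=> bde; pose M := rows3 b d e.
have uM : M \in unitmx by rewrite unitmxE unitfE -det3_rows3.
have [Eb Ed Ee] : [/\ b = vec3 1 0 0 *m M, d = vec3 0 1 0 *m M & e = vec3 0 0 1 *m M].
  by split; rewrite mulmx_rows3 !mxE /= !(scale0r, scale1r, addr0, add0r).
rewrite /pencil_num /pencil_den /line_chi_num /line_chi_den.
rewrite -[a](mulmxKV uM) -[c](mulmxKV uM) -[f](mulmxKV uM) -[g](mulmxKV uM) Eb Ed Ee.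
rewrite !det3_mulmx.
move: (a *m invmx M) (c *m invmx M) (f *m invmx M) (g *m invmx M) (\det M) => a' c' f' g' m.
rewrite !det3E !mxE /=.
ring.
Qed.

Lemma T3_identity (a b c d e f g : 'rV[R]_3) :
  det3 b d e != 0 -> det3 d a c != 0 -> det3 e c f != 0 -> det3 c f d != 0 ->
  det3 c e b != 0 -> det3 d g e != 0 -> det3 d f c != 0 ->
  line_chi_den b e a d c f d g != 0 ->
  let xa := pencil_chi e b c d f in let xb := pencil_chi d a b c e in
  let xc := pencil_chi c f e d b in let xd := pencil_chi d g f e c in
  xa * xc - (1 - xd) * (1 - xb) != 0 ->
  line_chi b e a d c f d g = xa * ((xb + xc - 1) / (xa * xc - (1 - xd) * (1 - xb))).
Proof.
move=> bde dac ecf cfd ceb dge dfc Dp0.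
apply: T3_fractions (T3_key a c f g bde); rewrite // /pencil_den mulf_neq0 //.
- by rewrite det3_cycle.
- by rewrite det3_cycle det3_swap oppr_eq0.
Qed.

Definition is_T3_image P (P' : int -> 'rV[R]_3) := forall i : int,
  meet (P (i - 2)) (P (i + 1)) (P (i - 1)) (P (i + 2)) (P' i).

Lemma T3_corner_even0 P (P' : int -> 'rV[R]_3) x (x' : int -> R) :
  nice3 P -> is_T3_image P P' -> corner_invariants P x -> corner_invariants P' x' ->
  x (-2) * x (-1) - (1 - x 1) * (1 - x (-4)) != 0 ->
  x' 0 = x (-2) * ((x (-4) + x (-1) - 1) / (x (-2) * x (-1) - (1 - x 1) * (1 - x (-4)))).
Proof.
(* T3_identity is applied to a, ..., g := P (-4), ..., P 2. *)
move=> nc hP' cP cP'.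
have [_ _ _ n5] := nc (-5); have [_ _ n4' n4] := nc (-4); have [n3' _ _ n3] := nc (-3).
have [n2 _ _ _] := nc (-2); have [n1 _ _ _] := nc (-1).
have dac := det3_neq0_cycle (det3_neq0_cycle n5).
have ecf := det3_neq0_swap (det3_neq0_cycle n3).
have cfd := det3_neq0_swap n2.
have ceb := det3_neq0_cycle n3'.
have dge := det3_neq0_swap n1.
have dfc := det3_neq0_cycle n2.
have ebd := det3_neq0_cycle (det3_neq0_cycle n4).
have dbe := det3_neq0_swap (det3_neq0_cycle n4).
have xb : x (-4) = pencil_chi (P (-1)) (P (-4)) (P (-3)) (P (-2)) (P 0).
  exact: corner_inv_pencil (cP (-2)).1 dac dbe.
have xa : x (-2) = pencil_chi (P 0) (P (-3)) (P (-2)) (P (-1)) (P 1).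
  exact: corner_inv_pencil (cP (-1)).1 ebd ecf.
have xc : x (-1) = pencil_chi (P (-2)) (P 1) (P 0) (P (-1)) (P (-3)).
  exact: corner_inv_pencil (cP (-1)).2 cfd ceb.
have xd : x 1 = pencil_chi (P (-1)) (P 2) (P 1) (P 0) (P (-2)).
  exact: corner_inv_pencil (cP 0).2 dge dfc.
have [z1 [z2 [eZ _]]] := meet_line2 (hP' 0).
have [x1 [x2 [eX _]]] := meet_line1 (hP' 1).
have [x3 [x4 [eX' _]]] := meet_line2 (hP' 1).
have [w1 [w2 [eW _]]] := meet_line1 (hP' 2).
have [-> Dp0] := corner_inv_line (hP' (-2)) (hP' (-1)) eZ eX eX' eW n4'
  (det3_neq0_swap n3) dge (cP' 0).1.
rewrite xa xb xc xd; exact: T3_identity.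
Qed.

Lemma gen_pos4_rev (A B C D : 'rV[R]_3) : gen_pos4 A B C D -> gen_pos4 D C B A.
Proof. by case=> *; split; rewrite det3_rev oppr_eq0. Qed.

Lemma nice3_shift P i : nice3 P -> nice3 (fun k => P (i + k)).
Proof. by move=> nc j; have := nc (i + j); rewrite -!addrA. Qed.

Lemma nice3_reflect P : nice3 P -> nice3 (fun k => P (- k)).
Proof.
move=> nc j; have := gen_pos4_rev (nc (- j - 4)).
rewrite subrK (_ : - j - 4 + 3 = - (j + 1)) 1?(_ : - j - 4 + 1 = - (j + 3)) -opprD.
- by [].
- by ring.
- by ring.
Qed.

Lemma is_T3_image_shift P (P' : int -> 'rV[R]_3) i : is_T3_image P P' ->
  is_T3_image (fun k => P (i + k)) (fun k => P' (i + k)).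
Proof. by move=> h j; have := h (i + j); rewrite -!addrA. Qed.

Lemma is_T3_image_reflect P (P' : int -> 'rV[R]_3) : is_T3_image P P' ->
  is_T3_image (fun k => P (- k)) (fun k => P' (- k)).
Proof. by move=> h j; cbv beta; apply: meet_sym; rewrite !opprD !opprK; apply: h. Qed.

Lemma corner_invariants_shift P x i : corner_invariants P x ->
  corner_invariants (fun k => P (i + k)) (fun k => x (2 * i + k)).
Proof.
move=> cP j; have [ce co] := cP (i + j).
by split; [move: ce | move: co]; rewrite /corner_even /corner_odd mulrDr -!addrA.
Qed.

Lemma corner_invariants_reflect P x : corner_invariants P x ->
  corner_invariants (fun k => P (- k)) (fun k => x (1 - k)).
Proof.
move=> cP j; have [ce co] := cP (- j); split.
- move: co; rewrite /corner_odd /corner_even; cbv beta; rewrite !opprD !opprK.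
  by rewrite mulrN (addrC (- (2 * j))).
- move: ce; rewrite /corner_odd /corner_even; cbv beta.
  rewrite (_ : 1 - (2 * j + 1) = 2 * - j); last by ring.
  by rewrite !opprD !opprK.
Qed.

End DeepDiagonalMap.

(* The odd
   formula is the even one for the reversed polygon k |-> P (i - k), whose corner
   invariants are k |-> x (2 * i + 1 - k). *)
Theorem mainTheorem15 (R : realType) (n : nat) (P P' : int -> 'rV[R]_3)
  (x x' : int -> R) :
  twisted_ngon n P -> nice3 P ->
  (forall i : int, meet (P (i - 2)) (P (i + 1)) (P (i - 1)) (P (i + 2)) (P' i)) ->
  corner_invariants P x -> corner_invariants P' x' ->
  forall i : int,
    (x (2 * i - 2) * x (2 * i - 1)
       - (1 - x (2 * i + 1)) * (1 - x (2 * i - 4)) != 0 ->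
     x' (2 * i) = x (2 * i - 2) * ((x (2 * i - 4) + x (2 * i - 1) - 1) /
       (x (2 * i - 2) * x (2 * i - 1) - (1 - x (2 * i + 1)) * (1 - x (2 * i - 4)))))
    /\
    (x (2 * i + 2) * x (2 * i + 3)
       - (1 - x (2 * i + 5)) * (1 - x (2 * i)) != 0 ->
     x' (2 * i + 1) = x (2 * i + 3) * ((x (2 * i + 2) + x (2 * i + 5) - 1) /
       (x (2 * i + 2) * x (2 * i + 3) - (1 - x (2 * i + 5)) * (1 - x (2 * i))))).
Proof.
move=> _ nc hP' cP cP' i.
have ncS := nice3_shift i nc; have hS := is_T3_image_shift i hP'.
have cS := corner_invariants_shift i cP; have cS' := corner_invariants_shift i cP'.
split=> hden.
- have -> : x' (2 * i) = x' (2 * i + 0) by rewrite addr0.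
  exact: T3_corner_even0 ncS hS cS cS' hden.
- have e0 : x (2 * i) = x (2 * i + 0) by rewrite addr0.
  rewrite e0 (addrC (x (2 * i + 2))) !(mulrC (x (2 * i + 2)))
    (mulrC (1 - x (2 * i + 5))) in hden *.
  exact: T3_corner_even0 (nice3_reflect ncS) (is_T3_image_reflect hS)
    (corner_invariants_reflect cS) (corner_invariants_reflect cS') hden.
Qed.
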